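(* There exists an invertible $22\times22$ binary matrix such that the corresponding linear kernel has partial distance sequence $(1,2,2,2,2,2,4,4,4,4,4,4,8,8,8,8,8,8,8,12,12,16)$. Consequently $E_{22}\ge\frac1{22}\sum_{i=0}^{21}\log_{22}D_{min}^{(i)}\approx0.50118$.
   Context: A kernel of dimension $\ell$ is a bijection $g:\{0,1\}^\ell\to\{0,1\}^\ell$; a linear kernel is $g({\bf u})={\bf u}G$ over $\mathbb{F}_2$ for an invertible $\ell\times\ell$ binary matrix $G$. ${\bf a}\bullet{\bf b}$ denotes concatenation, $d_H$ Hamming distance. Partial distances: $D_{min}^{(i)}=\min\{d_H(g({\bf w}\bullet 0\bullet{\bf u}),g({\bf w}\bullet 1\bullet {\bf v})) : {\bf w}\in\{0,1\}^i,\ {\bf u},{\bf v}\in\{0,1\}^{\ell-i-1}\}$, $i=0,\dots,\ell-1$; exponent $E(g)=\frac1\ell\sum_{i}\log_\ell D_{min}^{(i)}$; $E_\ell=\max_g E(g)$ over all kernels of dimension $\ell$. *)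

From HB Require Import structures.
From mathcomp Require Import all_boot all_order all_algebra.
Set Implicit Arguments. Unset Strict Implicit. Unset Printing Implicit Defensive.
Import GRing.Theory.

Definition dH (l : nat) (x y : 'rV['F_2]_l) : nat :=
  #|[set j : 'I_l | x ord0 j != y ord0 j]|.

Definition linker (l : nat) (G : 'M['F_2]_l) : 'rV['F_2]_l -> 'rV['F_2]_l :=
  fun u => (u *m G)%R.

(* x = w.0.u and y = w.1.v for some prefix w of length i and suffixes u, v:
   i.e. x and y agree on coordinates j < i, x_i = 0 and y_i = 1. *)
Definition pd_pair (l : nat) (i : 'I_l) (x y : 'rV['F_2]_l) : bool :=
  [forall j : 'I_l, (j < i)%N ==> (x ord0 j == y ord0 j)] &&
  (x ord0 i == 0%R) && (y ord0 i == 1%R).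

(* The minimum is
   taken over a nonempty set of Hamming distances, all of which are <= l,
   so the neutral element l of the min does not affect the value. *)
Definition pdist (l : nat) (g : 'rV['F_2]_l -> 'rV['F_2]_l) (i : 'I_l) : nat :=
  \big[minn/l]_(x : 'rV['F_2]_l)
     \big[minn/l]_(y : 'rV['F_2]_l | pd_pair i x y) dH (g x) (g y).

Definition pdist_seq (l : nat) (g : 'rV['F_2]_l -> 'rV['F_2]_l) : seq nat :=
  [seq pdist g i | i <- enum 'I_l].

From HB Require Import structures.
From mathcomp Require Import all_boot all_order all_algebra.
Set Implicit Arguments. Unset Strict Implicit. Unset Printing Implicit Defensive.
Import GRing.Theory.

(* For a linear kernel, d_H(uG, vG) is the weight of (v - u)G, and as (u, v)
   ranges over the pairs defining D^(i), v - u ranges over the vectors whose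
   first nonzero coordinate is i.  So D^(i) is the minimum weight of the coset
   g_i + <g_(i+1), ..., g_(l-1)> of the rows of G.  For the explicit G this
   minimum is attained at g_i itself, and the lower bound is checked by
   enumerating the 2^(21-i) vectors of each coset.  As no D^(i) vanishes, no
   nonzero vector is mapped to 0, so G is invertible. *)

Lemma F2_neq0 (a : 'F_2) : a != 0%R -> a = 1%R.
Proof. by case: a => [[|[|]]] // ? _; apply/val_inj. Qed.

Lemma natr_F2_neq0 (a : 'F_2) : ((a != 0%R)%:R)%R = a.
Proof. by have [->|/F2_neq0 ->] := eqVneq a 0%R; rewrite ?eqxx ?oner_neq0. Qed.

Lemma natr_F2_addb (a b : bool) : ((a (+) b)%:R = a%:R + b%:R :> 'F_2)%R.
Proof. by case: a; case: b; rewrite ?addr0 ?add0r //; apply/val_inj. Qed.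

Section BigMin.

Variables (I : finType) (P : pred I) (F : I -> nat) (m : nat).

Lemma geq_bigmin_cond i0 : P i0 -> \big[minn/m]_(i | P i) F i <= F i0.
Proof.
move=> Pi0; rewrite unlock; have : i0 \in index_enum I by rewrite mem_index_enum.
elim: (index_enum I) => [|a r IHr] //=; rewrite inE => /orP[/eqP <- | r_i0].
  by rewrite Pi0 geq_minl.
by case: (P a); [apply: leq_trans (geq_minr _ _) _|]; apply: IHr.
Qed.

Lemma leq_bigmin_cond d :
  d <= m -> (forall i, P i -> d <= F i) -> d <= \big[minn/m]_(i | P i) F i.
Proof. by move=> dm dF; elim/big_ind: _ => // a b da db; rewrite leq_min da db. Qed.

End BigMin.

Arguments geq_bigmin_cond {I P F m i0}.

Section LinearKernel.

Variable l : nat.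
Implicit Types (G : 'M['F_2]_l) (x y z : 'rV['F_2]_l).

Definition wt z : nat := #|[set j | z ord0 j != 0%R]|.

Definition lead_at (i : 'I_l) z : bool :=
  [forall j : 'I_l, (j < i)%N ==> (z ord0 j == 0%R)] && (z ord0 i == 1%R).

Lemma wt_le z : wt z <= l.
Proof. by rewrite -[X in _ <= X]card_ord max_card. Qed.

Lemma wt0 : wt 0%R = 0.
Proof. by apply: eq_card0 => j; rewrite !inE mxE eqxx. Qed.

Lemma dH_linker G x y : dH (linker G x) (linker G y) = wt ((y - x) *m G)%R.
Proof.
by apply: eq_card => j; rewrite !inE mulmxBl !mxE subr_eq0 eq_sym.
Qed.

Lemma pd_pair_lead_at i x y : pd_pair i x y -> lead_at i (y - x)%R.
Proof.
case/andP=> /andP[/forallP agree /eqP x_i] /eqP y_i.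
rewrite /lead_at !mxE x_i y_i subr0 eqxx andbT.
apply/forallP => j; apply/implyP => lt_ji.
by rewrite !mxE subr_eq0 eq_sym; apply: (implyP (agree j)).
Qed.

Lemma lead_at_pd_pair i z : lead_at i z -> pd_pair i 0%R z.
Proof.
case/andP=> /forallP zero_before z_i; rewrite /pd_pair mxE eqxx z_i !andbT.
by apply/forallP => j; apply/implyP => lt_ji; rewrite mxE eq_sym (implyP (zero_before j)).
Qed.

Lemma pdist_linker_le G i z : lead_at i z -> pdist (linker G) i <= wt (z *m G)%R.
Proof.
move=> z_i; apply: leq_trans (geq_bigmin_cond (i0 := 0%R) isT) _.
by rewrite -[z]subr0 -dH_linker geq_bigmin_cond ?lead_at_pd_pair.
Qed.

Lemma pdist_linker_eq G i d :
  (forall z, lead_at i z -> d <= wt (z *m G)%R) ->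
  (exists2 z, lead_at i z & wt (z *m G)%R = d) ->
  pdist (linker G) i = d.
Proof.
move=> lb [z z_i wt_z]; have d_le_l : d <= l by rewrite -wt_z wt_le.
apply/eqP; rewrite eqn_leq -{1}wt_z pdist_linker_le //=.
apply: leq_bigmin_cond => // x _; apply: leq_bigmin_cond => // y xy_i.
by rewrite dH_linker lb ?pd_pair_lead_at.
Qed.

Lemma exists_lead_at z : z != 0%R -> exists i, lead_at i z.
Proof.
move=> z_neq0; have /existsP [j z_j] : [exists j, z ord0 j != 0%R].
  apply: contraR z_neq0 => /existsPn z0.
  by apply/eqP/rowP => j; rewrite mxE; apply/eqP/negbNE/z0.
case: (@arg_minnP _ j (fun k => z ord0 k != 0%R) val z_j) => i z_i i_min; exists i.
rewrite /lead_at (F2_neq0 z_i) eqxx andbT; apply/forallP => k; apply/implyP => lt_ki.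
by apply: contraTT lt_ki => z_k; rewrite -leqNgt i_min.
Qed.

Lemma unitmx_pdist_seq G : 0 \notin pdist_seq (linker G) -> G \in unitmx.
Proof.
move=> no_zero; rewrite -row_free_unit -kermx_eq0; apply/rowV0P => z /sub_kermxP zG0.
apply: contraNeq no_zero => /exists_lead_at [i /(pdist_linker_le G)].
by rewrite zG0 wt0 leqn0 => /eqP <-; rewrite map_f ?mem_enum.
Qed.

End LinearKernel.

Fixpoint xors (s t : seq bool) : seq bool :=
  match s, t with
  | a :: s', b :: t' => (a (+) b) :: xors s' t'
  | [::], _ => t
  | _, [::] => s
  end.

Fixpoint lincomb (b : seq bool) (rs : seq (seq bool)) : seq bool :=
  match b, rs with
  | c :: b', r :: rs' => if c then xors r (lincomb b' rs') else lincomb b' rs'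
  | _, _ => [::]
  end.

Fixpoint all_subsums (P : pred (seq bool)) (acc : seq bool) (rs : seq (seq bool)) : bool :=
  match rs with
  | [::] => P acc
  | r :: rs' => all_subsums P acc rs' && all_subsums P (xors acc r) rs'
  end.

Lemma xors0 s : xors s [::] = s.
Proof. by case: s. Qed.

Lemma nth_xors s t j : nth false (xors s t) j = nth false s j (+) nth false t j.
Proof.
by elim: s t j => [|a s IHs] [|b t] [|j] //=; rewrite ?nth_nil ?addbF.
Qed.

Lemma xorsA : associative xors.
Proof.
elim=> [|a s IHs] [|b t] [|c u] //=; rewrite ?xors0 ?IHs //.
by rewrite addbA.
Qed.

Lemma size_xors s t : size (xors s t) = maxn (size s) (size t).
Proof. by elim: s t => [|a s IHs] [|b t] //=; rewrite IHs maxnSS. Qed.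

Lemma size_lincomb n b rs :
  all (fun r => size r <= n) rs -> size (lincomb b rs) <= n.
Proof.
elim: rs b => [|r rs IHrs] [|[] b] //= /andP[r_n rs_n]; last exact: IHrs.
by rewrite size_xors geq_max r_n IHrs.
Qed.

Lemma all_subsumsP P acc rs :
  all_subsums P acc rs -> forall b, size b = size rs -> P (xors acc (lincomb b rs)).
Proof.
elim: rs acc => [|r rs IHrs] acc /=; first by move=> P_acc [|c b] //= _; rewrite xors0.
case/andP=> Prs Prrs [|[] b] //= [size_b]; last exact: IHrs.
by rewrite xorsA; apply: IHrs.
Qed.

Lemma lincomb_lead i b rs : i < size b -> i < size rs ->
  (forall j, j < i -> ~~ nth false b j) -> nth false b i ->
  lincomb b rs = xors (nth [::] rs i) (lincomb (drop i.+1 b) (drop i.+1 rs)).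
Proof.
elim: i b rs => [|i IHi] [|c b] [|r rs] //= ltib ltirs zero_before b_i.
  by rewrite b_i !drop0.
have /negbTE /= -> := zero_before 0 isT.
by apply: IHi => // j lt_ji; apply: (zero_before j.+1).
Qed.

Lemma sum_nth_count n s : size s <= n -> \sum_(j < n) nth false s j = count id s.
Proof.
elim: n s => [|n IHn] [|b s] //= size_s; first by rewrite big_ord0.
  by rewrite big1 // => j _; rewrite nth_nil.
by rewrite big_ord_recl /= IHn.
Qed.

Section BitRows.

Variable l : nat.
Implicit Types (s : seq bool) (rs : seq (seq bool)) (z : 'rV['F_2]_l).

Definition bitrow s : 'rV['F_2]_l := (\row_j (nth false s j)%:R)%R.

Definition bitmx rs : 'M['F_2]_l := (\matrix_(i, j) (nth false (nth [::] rs i) j)%:R)%R.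

Definition bits z : seq bool := [seq z ord0 j != 0%R | j <- enum 'I_l].

Lemma bitrow_xors s t : bitrow (xors s t) = (bitrow s + bitrow t)%R.
Proof. by apply/rowP => j; rewrite !mxE nth_xors natr_F2_addb. Qed.

Lemma bitrow_nil : bitrow [::] = 0%R.
Proof. by apply/rowP => j; rewrite !mxE nth_nil. Qed.

Lemma row_bitmx rs i : row i (bitmx rs) = bitrow (nth [::] rs i).
Proof. by apply/rowP => j; rewrite !mxE. Qed.

Lemma size_bits z : size (bits z) = l.
Proof. by rewrite size_map size_enum_ord. Qed.

Lemma nth_bits z (j : 'I_l) : nth false (bits z) j = (z ord0 j != 0%R).
Proof. by rewrite (nth_map j) ?size_enum_ord // nth_ord_enum. Qed.

Lemma bitsK : cancel bits bitrow.
Proof. by move=> z; apply/rowP => j; rewrite mxE nth_bits natr_F2_neq0. Qed.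

Lemma wt_bitrow s : size s <= l -> wt (bitrow s) = count id s.
Proof.
move=> size_s; rewrite /wt -sum1_card big_mkcond -(sum_nth_count size_s) /=.
by apply: eq_bigr => j _; rewrite inE mxE; case: (nth false s j); rewrite ?oner_neq0 ?eqxx.
Qed.

Lemma sum_bitrow_lincomb n b rs : size b = n ->
  (\sum_(k < n) (nth false b k)%:R *: bitrow (nth [::] rs k))%R = bitrow (lincomb b rs).
Proof.
elim: n b rs => [|n IHn] [|c b] // rs; first by rewrite big_ord0 bitrow_nil.
case=> size_b; rewrite big_ord_recl /=; case: rs => [|r rs].
  by rewrite big1 => [|k _]; rewrite nth_nil bitrow_nil ?scaler0 ?addr0.
by rewrite (IHn b rs size_b); case: c; rewrite ?scale1r ?scale0r ?add0r ?bitrow_xors.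
Qed.

Lemma bitrow_mul_bitmx b rs :
  size b = l -> (bitrow b *m bitmx rs)%R = bitrow (lincomb b rs).
Proof.
move=> size_b; rewrite mulmx_sum_row -(sum_bitrow_lincomb rs size_b).
by apply: eq_bigr => k _; rewrite row_bitmx mxE.
Qed.

Lemma lead_at_delta (i : 'I_l) : lead_at i (delta_mx 0%R i).
Proof.
apply/andP; split; last by rewrite mxE !eqxx.
apply/forallP => j; apply/implyP => lt_ji.
by rewrite mxE eqxx; case: (j =P i) lt_ji => [->|]; rewrite ?ltnn.
Qed.

Lemma wt_lead_at_mul_bitmx rs i z :
  size rs = l -> all (fun r => size r <= l) rs -> lead_at i z ->
  wt (z *m bitmx rs)%R =
    count id (xors (nth [::] rs i) (lincomb (drop i.+1 (bits z)) (drop i.+1 rs))).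
Proof.
move=> size_rs rows_l /andP[/forallP zero_before /eqP z_i].
rewrite -{1}(bitsK z) bitrow_mul_bitmx ?size_bits // wt_bitrow ?(size_lincomb _ rows_l) //.
rewrite (lincomb_lead (i := i)) ?size_bits ?size_rs ?nth_bits ?z_i ?oner_neq0 // => j lt_ji.
have j_l := ltn_trans lt_ji (ltn_ord i).
by rewrite -[j]/(nat_of_ord (Ordinal j_l)) nth_bits negbK (implyP (zero_before _)).
Qed.

Definition pdist_cert (D : seq nat) rs : bool :=
  [&& size rs == l, size D == l, all (fun r => size r <= l) rs &
    all (fun i => (count id (nth [::] rs i) == nth 0 D i) &&
                  all_subsums (fun v => nth 0 D i <= count id v) (nth [::] rs i) (drop i.+1 rs))
        (iota 0 l)].

Lemma pdist_bitmx D rs (i : 'I_l) :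
  pdist_cert D rs -> pdist (linker (bitmx rs)) i = nth 0 D i.
Proof.
case/and4P=> /eqP size_rs _ rows_l /allP cert.
have /andP[/eqP wt_row subsums] := cert i (etrans (mem_iota 0 l i) (ltn_ord i)).
apply: pdist_linker_eq => [z z_i | ].
  rewrite (wt_lead_at_mul_bitmx size_rs rows_l z_i); apply: all_subsumsP subsums _ _.
  by rewrite !size_drop size_bits size_rs.
exists (delta_mx 0%R i); first exact: lead_at_delta.
by rewrite -rowE row_bitmx wt_bitrow ?(allP rows_l) ?mem_nth ?size_rs.
Qed.

Lemma pdist_seq_bitmx D rs : pdist_cert D rs -> pdist_seq (linker (bitmx rs)) = D.
Proof.
move=> cert; have /and4P[_ /eqP size_D _ _] := cert.
rewrite /pdist_seq (eq_map (fun i => pdist_bitmx i cert)) (map_comp (nth 0 D) val).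
by rewrite val_enum_ord -size_D -/(mkseq _ _) mkseq_nth.
Qed.

End BitRows.

Definition G22_supports : seq (seq nat) := [::
  [:: 0]; [:: 20; 21]; [:: 6; 12]; [:: 0; 10]; [:: 0; 11]; [:: 0; 19];
  [:: 9; 16; 17; 18]; [:: 0; 4; 5; 14]; [:: 7; 12; 19; 21]; [:: 15; 16; 19; 20];
  [:: 4; 15; 17; 20]; [:: 1; 11; 14; 21];
  [:: 4; 5; 6; 9; 10; 16; 17; 19]; [:: 5; 8; 10; 12; 17; 19; 20; 21];
  [:: 3; 7; 8; 9; 17; 18; 20; 21]; [:: 2; 7; 11; 14; 15; 16; 19; 21];
  [:: 0; 2; 3; 4; 11; 14; 16; 18]; [:: 3; 5; 7; 8; 11; 15; 19; 20];
  [:: 2; 3; 5; 6; 11; 15; 16; 17];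
  [:: 1; 4; 5; 6; 8; 9; 11; 13; 16; 18; 19; 21];
  [:: 0; 2; 3; 5; 6; 12; 13; 14; 16; 17; 18; 21];
  [:: 1; 2; 3; 6; 7; 8; 9; 10; 11; 12; 13; 14; 15; 16; 18; 20]].

Definition G22_rows : seq (seq bool) :=
  [seq mkseq (fun j => j \in s) 22 | s <- G22_supports].

Definition G22_pdists : seq nat :=
  [:: 1; 2; 2; 2; 2; 2; 4; 4; 4; 4; 4; 4; 8; 8; 8; 8; 8; 8; 8; 12; 12; 16].

Lemma G22_cert : pdist_cert 22 G22_pdists G22_rows.
Proof. by vm_compute. Qed.

Theorem mainTheorem15 :
  exists G : 'M['F_2]_22,
    G \in unitmx /\
    pdist_seq (linker G) =
      [:: 1; 2; 2; 2; 2; 2; 4; 4; 4; 4; 4; 4; 8; 8; 8; 8; 8; 8; 8; 12; 12; 16]%N.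
Proof.
have pdistsE := pdist_seq_bitmx G22_cert.
exists (bitmx 22 G22_rows); split; last exact: pdistsE.
by rewrite unitmx_pdist_seq ?pdistsE.
Qed.
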